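(* Let $\mathscr{H}^a,\mathscr{H}^b,\mathscr{H}^c$ be nonzero finite-dimensional Hilbert spaces, with identity operators $\hat I^a,\hat I^b,\hat I^c$. Let $\hat Q^a$ be an operator on $\mathscr{H}^a$, $\hat Q^c$ an operator on $\mathscr{H}^c$, $\hat Q^{ab}$ an operator on $\mathscr{H}^a\otimes\mathscr{H}^b$, and $\hat Q^{bc}$ an operator on $\mathscr{H}^b\otimes\mathscr{H}^c$. Suppose that, as operators on $\mathscr{H}^a\otimes\mathscr{H}^b\otimes\mathscr{H}^c$, $$\hat Q^a\otimes\hat I^b\otimes\hat I^c+\hat I^a\otimes\hat Q^{bc}=\hat Q^{ab}\otimes\hat I^c+\hat I^a\otimes\hat I^b\otimes\hat Q^c .$$ Then there exists a unique operator $\hat Q^b$ on $\mathscr{H}^b$ such that simultaneously $$\hat Q^{bc}=\hat Q^b\otimes\hat I^c+\hat I^b\otimes\hat Q^c\qquad\text{and}\qquad \hat Q^{ab}=\hat Q^a\otimes\hat I^b+\hat I^a\otimes\hat Q^b .$$ *)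

(* Operators on finite-dimensional complex Hilbert spaces
   H^a, H^b, H^c of dimensions na, nb, nc are square matrices over the
   complex numbers R[i] (R a real closed field, e.g. the reals); the tensor
   product of operators is the Kronecker product tensmx (from real_closed). *)
From mathcomp Require Import all_boot all_algebra.
From mathcomp Require Export complex mxtens.
Set Implicit Arguments. Unset Strict Implicit. Unset Printing Implicit Defensive.
Import GRing.Theory.
Local Open Scope ring_scope.

(* Canonical identification H^a (x) (H^b (x) H^c) = (H^a (x) H^b) (x) H^c:
   reinterpret an operator on a*(b*c) as one on (a*b)*c. *)
Definition assocmx (K : Type) (na nb nc : nat)
  (M : 'M[K]_(na * (nb * nc))) : 'M[K]_(na * nb * nc) :=
  castmx (mulnA na nb nc, mulnA na nb nc) M.

(* Read an operator M on H (x) H^c through its partial matrix elements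
   M(c, c'), which are operators on H. The (c0, c0) element of the hypothesis
   exhibits Qab as Qa (x) I + I (x) Qb with Qb := Qbc(c0, c0) - Qc(c0, c0) I.
   Substituting this back, the (c, c') element of the hypothesis becomes
   I (x) Qbc(c, c') = I (x) (Qb (x) I + I (x) Qc)(c, c'), and I (x) _ is
   injective since H^a is nonzero; the same injectivity gives uniqueness. *)
From HB Require Import structures.
From mathcomp Require Import all_boot all_algebra.
From mathcomp Require Import complex mxtens.
Set Implicit Arguments.
Unset Strict Implicit.
Unset Printing Implicit Defensive.
Import GRing.Theory.
Local Open Scope ring_scope.

Lemma mxtens_index_assoc m n p (i : 'I_m) (j : 'I_n) (k : 'I_p) :
  cast_ord (esym (mulnA m n p)) (mxtens_index (mxtens_index (i, j), k))
  = mxtens_index (i, mxtens_index (j, k)).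
Proof. by apply: val_inj; rewrite /= mulnDl -mulnA addnA. Qed.

Section TensorSlices.

Variable R : comPzRingType.

Lemma tensmx_is_linear m n p q (A : 'M[R]_(m, n)) :
  linear (@tensmx R m n p q A).
Proof.
by move=> a B C; apply/matrixP => i j; rewrite !mxE mulrDr mulrCA.
Qed.

HB.instance Definition _ m n p q (A : 'M[R]_(m, n)) :=
  GRing.isLinear.Build R _ _ _ (@tensmx R m n p q A)
    (@tensmx_is_linear m n p q A).

Definition tens_slice m n p q (k : 'I_p) (l : 'I_q) (M : 'M[R]_(m * p, n * q))
  : 'M[R]_(m, n) :=
  \matrix_(i, j) M (mxtens_index (i, k)) (mxtens_index (j, l)).

Lemma tens_slice_is_linear m n p q (k : 'I_p) (l : 'I_q) :
  linear (@tens_slice m n p q k l).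
Proof. by move=> a M N; apply/matrixP => i j; rewrite !mxE. Qed.

HB.instance Definition _ m n p q (k : 'I_p) (l : 'I_q) :=
  GRing.isLinear.Build R _ _ _ (@tens_slice m n p q k l)
    (@tens_slice_is_linear m n p q k l).

Lemma tens_sliceE m n p q (A : 'M[R]_(m, n)) (B : 'M[R]_(p, q)) k l :
  tens_slice k l (A *t B) = B k l *: A.
Proof. by apply/matrixP => i j; rewrite [LHS]mxE tensmxE mxE mulrC. Qed.

Lemma tens_slice_assoc m n p (A : 'M[R]_m) (M : 'M[R]_(n * p)) k l :
  tens_slice k l (assocmx (A *t M)) = A *t tens_slice k l M.
Proof.
apply/matrixP => x y.
case: (mxtens_indexP x) => i j; case: (mxtens_indexP y) => i' j'.
by rewrite mxE castmxE !mxtens_index_assoc !tensmxE mxE.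
Qed.

Lemma tens_slice_ext m n p q (M N : 'M[R]_(m * p, n * q)) :
  (forall k l, tens_slice k l M = tens_slice k l N) -> M = N.
Proof.
move=> eqMN; apply/matrixP => x y.
case: (mxtens_indexP x) => i k; case: (mxtens_indexP y) => j l.
by have /matrixP/(_ i j) := eqMN k l; rewrite !mxE.
Qed.

End TensorSlices.

Lemma tensmx_inj (R : idomainType) m n p q (A : 'M[R]_(m, n)) i j :
  A i j != 0 -> injective (@tensmx R m n p q A).
Proof.
move=> Aij_neq0 B C /matrixP eqBC; apply/matrixP => k l.
have := eqBC (mxtens_index (i, k)) (mxtens_index (j, l)).
by rewrite !tensmxE; apply: mulfI.
Qed.

Lemma tens1mx_inj (R : idomainType) m p q :
  (0 < m)%N -> injective (@tensmx R m m p q 1%:M).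
Proof.
move=> m_gt0; apply: (tensmx_inj (i := Ordinal m_gt0) (j := Ordinal m_gt0)).
by rewrite mxE eqxx oner_neq0.
Qed.

Theorem proposition1 (R : rcfType) (na nb nc : nat)
  (Hna : (0 < na)%N) (Hnb : (0 < nb)%N) (Hnc : (0 < nc)%N)
  (Qa : 'M[R[i]]_na) (Qc : 'M[R[i]]_nc)
  (Qab : 'M[R[i]]_(na * nb)) (Qbc : 'M[R[i]]_(nb * nc)) :
  tensmx (tensmx Qa (1%:M : 'M[R[i]]_nb)) (1%:M : 'M[R[i]]_nc)
    + assocmx (tensmx (1%:M : 'M[R[i]]_na) Qbc)
  = tensmx Qab (1%:M : 'M[R[i]]_nc)
    + tensmx (tensmx (1%:M : 'M[R[i]]_na) (1%:M : 'M[R[i]]_nb)) Qc ->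
  exists! Qb : 'M[R[i]]_nb,
    Qbc = tensmx Qb (1%:M : 'M[R[i]]_nc) + tensmx (1%:M : 'M[R[i]]_nb) Qc /\
    Qab = tensmx Qa (1%:M : 'M[R[i]]_nb) + tensmx (1%:M : 'M[R[i]]_na) Qb.
Proof.
move=> eqQ.
set I_a : 'M[R[i]]_na := 1%:M; set I_b : 'M[R[i]]_nb := 1%:M.
have slice_eqQ k l : (k == l)%:R *: (Qa *t I_b) + I_a *t tens_slice k l Qbc
    = (k == l)%:R *: Qab + Qc k l *: (I_a *t I_b).
  by have := congr1 (tens_slice k l) eqQ; rewrite !linearD /= !tens_sliceE
    tens_slice_assoc !mxE.
have [Qb eqQab] : exists Qb, Qab = Qa *t I_b + I_a *t Qb.
  pose c0 : 'I_nc := Ordinal Hnc.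
  exists (tens_slice c0 c0 Qbc - Qc c0 c0 *: I_b).
  rewrite linearB linearZ /= addrA; have := slice_eqQ c0 c0.
  by rewrite eqxx !scale1r => ->; rewrite addrK.
exists Qb; split=> [|Qb' [_ eqQab']]; last first.
  by apply: (tens1mx_inj Hna); apply: (addrI (Qa *t I_b)); rewrite -eqQab.
split=> //; apply: tens_slice_ext => k l.
rewrite linearD /= !tens_sliceE mxE; apply: (tens1mx_inj Hna).
apply: (addrI ((k == l)%:R *: (Qa *t I_b))).
by rewrite slice_eqQ eqQab scalerDr -addrA linearD !linearZ.
Qed.
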